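(* Let $\alpha\in\mathbb{N}_0$ and $N>0$. For every $n\in\mathbb{N}_0$ the Laguerre-type polynomial $L_n^{\alpha,N}$ satisfies, for $0\le x<\infty$, $$\Big\{\big[L_{2,x}^{\alpha}+n\big]+\frac{N}{(\alpha+2)!}\big[L_{2\alpha+4,x}^{\alpha}+(n)_{\alpha+2}\big]\Big\}L_n^{\alpha,N}(x)=0,$$ where for sufficiently smooth $y$, $$L_{2,x}^{\alpha}y(x)=e^x x^{-\alpha}D_x\big\{e^{-x}x^{\alpha+1}D_x y(x)\big\},\qquad L_{2\alpha+4,x}^{\alpha}y(x)=(-1)^{\alpha+1}e^x x\,D_x^{\alpha+2}\big\{e^{-x}D_x^{\alpha+2}[x^{\alpha+1}y(x)]\big\}.$$
   Context: $D_x^i$ denotes the $i$-fold derivative in $x$; $(a)_k=a(a+1)\cdots(a+k-1)$ is the Pochhammer symbol. For $\gamma>-1$, $L_n^{\gamma}(x)=\frac{(\gamma+1)_n}{n!}\,{}_1F_1(-n;\gamma+1;x)$ are the classical Laguerre polynomials. The Laguerre-type polynomials are $L_n^{\alpha,N}(x)=L_n^{\alpha}(x)+N\,T_n^{\alpha}(x)$, where $T_0^{\alpha}=0$ and for $n\ge1$, $T_n^{\alpha}(x)=-t_n^{\alpha}\,x\,L_{n-1}^{\alpha+2}(x)$ with $t_n^{\alpha}=(\alpha+2)_{n-1}/n!$. Note $L_{2,x}^{\alpha}=xD_x^2+(\alpha+1-x)D_x$. *)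

From Stdlib Require Import Arith Reals Lra ClassicalEpsilon.
Open Scope R_scope.

(* Derivative of a real function, as a total function: the (unique) limit
   l with derivable_pt_lim f x l when it exists, 0 otherwise. *)
Definition Dx (f : R -> R) : R -> R := fun x =>
  match excluded_middle_informative (exists l, derivable_pt_lim f x l) with
  | left H => proj1_sig (constructive_indefinite_description _ H)
  | right _ => 0
  end.

Definition Dxn (i : nat) (f : R -> R) : R -> R := Nat.iter i Dx f.

Fixpoint poch (a : R) (k : nat) : R :=
  match k with
  | O => 1
  | S k' => poch a k' * (a + INR k')
  end.

(* Classical Laguerre polynomial
   L_n^g(x) = (g+1)_n/n! * 1F1(-n; g+1; x)
            = (g+1)_n/n! * sum_{k=0}^n (-n)_k / ((g+1)_k k!) x^k. *)
Definition Laguerre (n : nat) (g : R) (x : R) : R :=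
  poch (g + 1) n / INR (fact n) *
  sum_f_R0 (fun k => poch (- INR n) k / (poch (g + 1) k * INR (fact k)) * x ^ k) n.

Definition tcoef (n : nat) (a : R) : R := poch (a + 2) (n - 1) / INR (fact n).

Definition Tpoly (n : nat) (a : R) (x : R) : R :=
  match n with
  | O => 0
  | S m => - tcoef n a * x * Laguerre m (a + 2) x
  end.

Definition LaguerreType (n : nat) (a N : R) (x : R) : R :=
  Laguerre n a x + N * Tpoly n a x.

Definition L2op (a : R) (y : R -> R) (x : R) : R :=
  x * Dxn 2 y x + (a + 1 - x) * Dx y x.

Definition L2a4op (a : nat) (y : R -> R) (x : R) : R :=
  (-1) ^ (a + 1) * exp x * x *
  Dxn (a + 2) (fun t => exp (- t) * Dxn (a + 2) (fun s => s ^ (a + 1) * y s) t) x.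

From Pilot Require Import Defs.
From Stdlib Require Import Arith Reals Lra Lia FunctionalExtensionality ClassicalEpsilon.
Open Scope R_scope.

(* Every function involved is a polynomial, handled through its coefficient
   sequence, so that derivatives become shifts of coefficients.  Two identities
   carry the argument.  First, [L_m^h - D L_m^h = L_m^(h+1)], hence
   [D (e^-x L_m^h) = - e^-x L_m^(h+1)] and the outer [D^(a+2)] of the
   higher-order operator just raises the parameter by [a+2].  Second, for
   [n = m+1] the inner expression [D^(a+2) (x^(a+1) L_n^(a,N))] is a
   combination [P L_m^1 + Q L_m^0].  The equation then reduces to an identity
   between the coefficients of [x^k], checked by field arithmetic. *)

Lemma Dx_derivable_pt_lim (f f' : R -> R) :
  (forall x, derivable_pt_lim f x (f' x)) -> Defs.Dx f = f'.
Proof.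
  intros Hf. apply functional_extensionality; intro x. unfold Defs.Dx.
  destruct (excluded_middle_informative _) as [Hex | Hnex].
  - destruct (constructive_indefinite_description _ Hex) as [l Hl]; simpl.
    exact (uniqueness_limite f x l (f' x) Hl (Hf x)).
  - exfalso; apply Hnex; exists (f' x); apply Hf.
Qed.

Lemma Dxn_S (i : nat) (f : R -> R) : Dxn (S i) f = Defs.Dx (Dxn i f).
Proof. reflexivity. Qed.

Lemma Dxn_S_const (i : nat) (c : R) : Dxn (S i) (fun _ => c) = (fun _ => 0).
Proof.
  induction i as [|i IHi]; rewrite Dxn_S; [|rewrite IHi];
    apply Dx_derivable_pt_lim; intros; apply derivable_pt_lim_const.
Qed.

Lemma derivable_pt_lim_exp_opp (x : R) :
  derivable_pt_lim (fun t => exp (- t)) x (- exp (- x)).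
Proof.
  replace (- exp (- x)) with (exp (- x) * -1) by ring.
  exact (derivable_pt_lim_comp (fun t => - t) exp x (-1) (exp (- x))
     (derivable_pt_lim_opp _ _ _ (derivable_pt_lim_id x)) (derivable_pt_lim_exp (- x))).
Qed.

Lemma derivable_pt_lim_eq (f : R -> R) (x l l' : R) :
  l = l' -> derivable_pt_lim f x l -> derivable_pt_lim f x l'.
Proof. intros ->; auto. Qed.

Definition cpoly (c : nat -> R) (d : nat) (x : R) : R :=
  sum_f_R0 (fun k => c k * x ^ k) d.

Definition cderiv (c : nat -> R) (k : nat) : R := INR (S k) * c (S k).

Definition cshift (c : nat -> R) (k : nat) : R :=
  match k with O => 0 | S j => c j end.

Definition deg_le (c : nat -> R) (d : nat) : Prop :=
  forall k, (d < k)%nat -> c k = 0.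

Lemma cpoly_S (c : nat -> R) (d : nat) (x : R) :
  cpoly c (S d) x = cpoly c d x + c (S d) * x ^ S d.
Proof. reflexivity. Qed.

Lemma cpoly_ext (c1 c2 : nat -> R) (d : nat) (x : R) :
  (forall k, c1 k = c2 k) -> cpoly c1 d x = cpoly c2 d x.
Proof. intros H; unfold cpoly; apply sum_eq; intros; rewrite H; auto. Qed.

Lemma cpoly_zero (c : nat -> R) (d : nat) (x : R) :
  (forall k, c k = 0) -> cpoly c d x = 0.
Proof.
  intros H. induction d as [|d IHd]; unfold cpoly in *; simpl; rewrite H;
    [|rewrite IHd]; ring.
Qed.

Lemma cpoly_plus (c1 c2 : nat -> R) (d : nat) (x : R) :
  cpoly (fun k => c1 k + c2 k) d x = cpoly c1 d x + cpoly c2 d x.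
Proof. unfold cpoly. rewrite <- plus_sum. apply sum_eq; intros; ring. Qed.

Lemma cpoly_minus (c1 c2 : nat -> R) (d : nat) (x : R) :
  cpoly (fun k => c1 k - c2 k) d x = cpoly c1 d x - cpoly c2 d x.
Proof. unfold cpoly. rewrite <- minus_sum. apply sum_eq; intros; ring. Qed.

Lemma cpoly_scal (r : R) (c : nat -> R) (d : nat) (x : R) :
  cpoly (fun k => r * c k) d x = r * cpoly c d x.
Proof.
  induction d as [|d IHd]; [unfold cpoly; simpl; ring|].
  rewrite !cpoly_S, IHd. ring.
Qed.

Lemma cpoly_cshift (c : nat -> R) (d : nat) (x : R) :
  cpoly (cshift c) (S d) x = x * cpoly c d x.
Proof.
  induction d as [|d IHd]; [unfold cpoly; simpl; ring|].
  rewrite cpoly_S, IHd, cpoly_S. simpl. ring.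
Qed.

Lemma cpoly_iter_cshift (j : nat) (c : nat -> R) (d : nat) (x : R) :
  cpoly (Nat.iter j cshift c) (j + d) x = x ^ j * cpoly c d x.
Proof.
  induction j as [|j IHj]; simpl; [ring|].
  rewrite cpoly_cshift, IHj. ring.
Qed.

Lemma cpoly_widen (c : nat -> R) (d e : nat) (x : R) :
  deg_le c d -> (d <= e)%nat -> cpoly c e x = cpoly c d x.
Proof.
  intros Hc Hde. induction Hde as [|e Hde IH]; auto.
  rewrite cpoly_S, IH, Hc by lia. ring.
Qed.

Lemma deg_le_cderiv (c : nat -> R) (d : nat) : deg_le c d -> deg_le (cderiv c) d.
Proof. intros Hc k Hk. unfold cderiv. rewrite Hc by lia. ring. Qed.

Lemma deg_le_cshift (c : nat -> R) (d : nat) : deg_le c d -> deg_le (cshift c) (S d).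
Proof. intros Hc [|k] Hk; [lia|]. apply Hc; lia. Qed.

Lemma deg_le_iter_cshift (j : nat) (c : nat -> R) (d : nat) :
  deg_le c d -> deg_le (Nat.iter j cshift c) (j + d).
Proof. intros Hc. induction j; simpl; auto. apply deg_le_cshift; auto. Qed.

Lemma iter_cshift (j : nat) (c : nat -> R) (k : nat) :
  Nat.iter j cshift c (k + j)%nat = c k.
Proof.
  induction j as [|j IHj]; simpl; [rewrite Nat.add_0_r; reflexivity|].
  rewrite Nat.add_succ_r. exact IHj.
Qed.

Lemma derivable_pt_lim_cpoly_S (c : nat -> R) (d : nat) (x : R) :
  derivable_pt_lim (cpoly c (S d)) x (cpoly (cderiv c) d x).
Proof.
  induction d as [|d IHd].
  - unfold cpoly, cderiv; simpl.
    replace (1 * c 1%nat * 1) with (0 + c 1%nat * (INR 1 * x ^ pred 1)) by (simpl; ring).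
    apply (derivable_pt_lim_plus (fun _ => c 0%nat * 1) (fun t => c 1%nat * t ^ 1)).
    + apply derivable_pt_lim_const.
    + apply derivable_pt_lim_scal, derivable_pt_lim_pow.
  - replace (cpoly c (S (S d))) with (fun t => cpoly c (S d) t + c (S (S d)) * t ^ S (S d))
      by (apply functional_extensionality; reflexivity).
    rewrite cpoly_S. unfold cderiv at 2.
    replace (INR (S (S d)) * c (S (S d)) * x ^ S d)
      with (c (S (S d)) * (INR (S (S d)) * x ^ pred (S (S d)))) by (simpl; ring).
    apply derivable_pt_lim_plus; [exact IHd|].
    apply derivable_pt_lim_scal, derivable_pt_lim_pow.
Qed.

Lemma derivable_pt_lim_cpoly (c : nat -> R) (d : nat) (x : R) :
  deg_le c d -> derivable_pt_lim (cpoly c d) x (cpoly (cderiv c) d x).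
Proof.
  intros Hc. destruct d as [|d].
  - replace (cpoly (cderiv c) 0 x) with 0
      by (unfold cpoly, cderiv; simpl; rewrite (Hc 1%nat) by lia; ring).
    change (derivable_pt_lim (fun _ => c 0%nat * 1) x 0). apply derivable_pt_lim_const.
  - rewrite cpoly_S. unfold cderiv at 2. rewrite (Hc (S (S d))) by lia.
    rewrite Rmult_0_r, Rmult_0_l, Rplus_0_r. apply derivable_pt_lim_cpoly_S.
Qed.

Lemma Dx_cpoly (c : nat -> R) (d : nat) :
  deg_le c d -> Defs.Dx (cpoly c d) = cpoly (cderiv c) d.
Proof. intros Hc. apply Dx_derivable_pt_lim. intros; apply derivable_pt_lim_cpoly, Hc. Qed.

Lemma Dxn_cpoly (i : nat) (c : nat -> R) (d : nat) :
  deg_le c d -> Dxn i (cpoly c d) = cpoly (Nat.iter i cderiv c) d.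
Proof.
  intros Hc. induction i as [|i IHi]; [reflexivity|].
  rewrite Dxn_S, IHi, Nat.iter_succ. apply Dx_cpoly.
  clear IHi. induction i; simpl; auto using deg_le_cderiv.
Qed.

Lemma poch_S_l (a : R) (i : nat) : poch a (S i) = a * poch (a + 1) i.
Proof.
  induction i as [|i IHi]; [simpl; ring|].
  change (poch a (S i) * (a + INR (S i)) = a * (poch (a + 1) i * (a + 1 + INR i))).
  rewrite IHi, S_INR. ring.
Qed.

Ltac expand_factorials :=
  repeat rewrite ?Nat.add_succ_r, ?Nat.add_succ_l, ?Nat.add_0_r, ?Nat.add_0_l;
  rewrite !fact_simpl, !mult_INR, !S_INR, ?plus_INR;
  change (INR (fact 0)) with 1; change (INR 0) with 0.

Ltac field_INR :=
  repeat match goal with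
  | v : nat |- _ => assert_fails (assert (0 <= INR v) by assumption); pose proof (pos_INR v)
  end;
  field; repeat split; first [apply INR_fact_neq_0 | lra].

Lemma poch_INR_S (g n : nat) : poch (INR (S g)) n = INR (fact (g + n)) / INR (fact g).
Proof.
  induction n as [|n IHn]; cbn [poch].
  - rewrite Nat.add_0_r. field. apply INR_fact_neq_0.
  - rewrite IHn, Nat.add_succ_r. expand_factorials. field_INR.
Qed.

Lemma poch_opp_INR_0 (n k : nat) : (n < k)%nat -> poch (- INR n) k = 0.
Proof.
  intros Hk. induction k as [|k IHk]; [lia|]. simpl.
  destruct (Nat.eq_dec k n) as [->|Hne]; [ring|].
  rewrite IHk by lia. ring.
Qed.

Lemma poch_opp_INR_S (m i : nat) : poch (- INR (S m)) (S i) = - INR (S m) * poch (- INR m) i.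
Proof. rewrite poch_S_l, S_INR. do 2 f_equal. ring. Qed.

Lemma iter_cderiv (i : nat) (c : nat -> R) (k : nat) :
  Nat.iter i cderiv c k = poch (INR (S k)) i * c (k + i)%nat.
Proof.
  revert k. induction i as [|i IHi]; intros k.
  - rewrite Nat.add_0_r. simpl. ring.
  - rewrite Nat.iter_succ. unfold cderiv. rewrite IHi, Nat.add_succ_r, <- Nat.add_succ_l.
    rewrite !poch_INR_S. expand_factorials. field_INR.
Qed.

Lemma Dxn_cpoly_deg_lt (i : nat) (c : nat -> R) (d : nat) :
  deg_le c d -> (d < i)%nat -> Dxn i (cpoly c d) = (fun _ => 0).
Proof.
  intros Hc Hdi. rewrite Dxn_cpoly by exact Hc.
  apply functional_extensionality; intro x. apply cpoly_zero; intro k.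
  rewrite iter_cderiv, Hc by lia. ring.
Qed.

Definition lag_coef (n g k : nat) : R :=
  poch (INR g + 1) n / INR (fact n) *
  (poch (- INR n) k / (poch (INR g + 1) k * INR (fact k))).

Lemma Laguerre_cpoly (n g : nat) : Laguerre n (INR g) = cpoly (lag_coef n g) n.
Proof.
  apply functional_extensionality; intro x. unfold Laguerre, cpoly, lag_coef.
  rewrite scal_sum. apply sum_eq. intros; ring.
Qed.

Lemma deg_le_lag_coef (n g : nat) : deg_le (lag_coef n g) n.
Proof. intros k Hk. unfold lag_coef. rewrite poch_opp_INR_0 by exact Hk. unfold Rdiv; ring. Qed.

Lemma lag_coef_sub_cderiv (m h k : nat) :
  lag_coef m h k - cderiv (lag_coef m h) k = lag_coef m (S h) k.
Proof.
  unfold cderiv, lag_coef. rewrite <- !S_INR, !poch_INR_S.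
  change (poch (- INR m) (S k)) with (poch (- INR m) k * (- INR m + INR k)).
  expand_factorials. field_INR.
Qed.

Lemma derivable_pt_lim_Laguerre (m h : nat) (x : R) :
  derivable_pt_lim (Laguerre m (INR h)) x (Laguerre m (INR h) x - Laguerre m (INR (S h)) x).
Proof.
  rewrite !Laguerre_cpoly.
  eapply derivable_pt_lim_eq; [|apply derivable_pt_lim_cpoly, deg_le_lag_coef].
  rewrite <- (cpoly_ext _ _ _ _ (lag_coef_sub_cderiv m h)), cpoly_minus. ring.
Qed.

Lemma derivable_pt_lim_exp_Laguerre (m h : nat) (C P Q x : R) :
  derivable_pt_lim
    (fun t => C * exp (- t) * (P * Laguerre m (INR (S h)) t + Q * Laguerre m (INR h) t)) x
    (- C * exp (- x) * (P * Laguerre m (INR (S (S h))) x + Q * Laguerre m (INR (S h)) x)).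
Proof.
  pose proof (derivable_pt_lim_scal _ C x _ (derivable_pt_lim_exp_opp x)) as Hexp.
  pose proof (derivable_pt_lim_plus _ _ x _ _
    (derivable_pt_lim_scal _ P x _ (derivable_pt_lim_Laguerre m (S h) x))
    (derivable_pt_lim_scal _ Q x _ (derivable_pt_lim_Laguerre m h x))) as Hlag.
  eapply derivable_pt_lim_eq; [|exact (derivable_pt_lim_mult _ _ x _ _ Hexp Hlag)].
  unfold mult_real_fct, plus_fct. ring.
Qed.

Lemma Dxn_exp_Laguerre (i m h : nat) (P Q : R) :
  Dxn i (fun t => exp (- t) * (P * Laguerre m (INR (S h)) t + Q * Laguerre m (INR h) t)) =
  (fun t => (-1) ^ i * exp (- t) *
            (P * Laguerre m (INR (S h + i)) t + Q * Laguerre m (INR (h + i)) t)).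
Proof.
  induction i as [|i IHi].
  - apply functional_extensionality; intro t. rewrite !Nat.add_0_r. simpl. ring.
  - rewrite Dxn_S, IHi, !Nat.add_succ_r, <- Nat.add_succ_l. apply Dx_derivable_pt_lim; intro x.
    eapply derivable_pt_lim_eq; [|apply (derivable_pt_lim_exp_Laguerre m (h + i))].
    simpl. ring.
Qed.

Lemma L2op_cpoly (r : R) (c : nat -> R) (d : nat) (x : R) :
  deg_le c d ->
  L2op r (cpoly c d) x =
  cpoly (fun k => cshift (cderiv (cderiv c)) k + (r + 1) * cderiv c k
                  - cshift (cderiv c) k) (S d) x.
Proof.
  intros Hc. unfold L2op.
  change (Dxn 2 (cpoly c d)) with (Defs.Dx (Defs.Dx (cpoly c d))).
  rewrite !Dx_cpoly by auto using deg_le_cderiv.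
  rewrite cpoly_minus, cpoly_plus, cpoly_scal, !cpoly_cshift.
  rewrite (cpoly_widen (cderiv c) d (S d)) by auto using deg_le_cderiv. ring.
Qed.

Definition lagtype_coef (a m : nat) (N : R) (k : nat) : R :=
  lag_coef (S m) a k - N * tcoef (S m) (INR a) * cshift (lag_coef m (a + 2)) k.

Lemma LaguerreType_S_cpoly (a m : nat) (N : R) :
  LaguerreType (S m) (INR a) N = cpoly (lagtype_coef a m N) (S m).
Proof.
  apply functional_extensionality; intro x. unfold LaguerreType, Tpoly, lagtype_coef.
  replace (INR a + 2) with (INR (a + 2)) by (rewrite plus_INR; simpl; ring).
  rewrite !Laguerre_cpoly, cpoly_minus, cpoly_scal, cpoly_cshift. ring.
Qed.

Lemma deg_le_lagtype_coef (a m : nat) (N : R) : deg_le (lagtype_coef a m N) (S m).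
Proof.
  intros k Hk. unfold lagtype_coef. rewrite (deg_le_lag_coef (S m) a k Hk).
  rewrite (deg_le_cshift _ _ (deg_le_lag_coef m (a + 2)) k Hk). ring.
Qed.

Definition inner_P (a m : nat) : R :=
  - (INR a + 1) * INR (fact (m + a + 1)) / INR (fact (S m)).

Definition inner_Q (a m : nat) (N : R) : R :=
  - (INR (fact (m + a + 1)) + N * tcoef (S m) (INR a) * INR (fact (m + a + 2))) / INR (fact m).

Lemma poch_mul_lagtype_coef_S (a m : nat) (N : R) (k : nat) :
  poch (INR (S k)) (a + 2) * lagtype_coef a m N (S k) =
  inner_P a m * lag_coef m 1 k + inner_Q a m N * lag_coef m 0 k.
Proof.
  unfold lagtype_coef, inner_P, inner_Q, tcoef, lag_coef. cbn [cshift].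
  rewrite Nat.sub_succ, Nat.sub_0_r, poch_opp_INR_S.
  replace (INR a + 2) with (INR (S (S a))) by (rewrite !S_INR; ring).
  rewrite <- !S_INR, !poch_INR_S.
  expand_factorials. rewrite (Nat.add_comm m a), (Nat.add_comm k a). field_INR.
Qed.

Lemma Dxn_pow_mul_LaguerreType_S (a m : nat) (N : R) :
  Dxn (a + 2) (fun s => s ^ (a + 1) * LaguerreType (S m) (INR a) N s) =
  (fun t => inner_P a m * Laguerre m (INR 1) t + inner_Q a m N * Laguerre m (INR 0) t).
Proof.
  set (Y := lagtype_coef a m N).
  assert (HY : deg_le Y (S m)) by apply deg_le_lagtype_coef.
  replace (fun s => s ^ (a + 1) * LaguerreType (S m) (INR a) N s)
    with (cpoly (Nat.iter (a + 1) cshift Y) (a + 1 + S m))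
    by (apply functional_extensionality; intro s;
        rewrite cpoly_iter_cshift, LaguerreType_S_cpoly; reflexivity).
  rewrite Dxn_cpoly by (apply deg_le_iter_cshift, HY).
  assert (Hcoef : forall k, Nat.iter (a + 2) cderiv (Nat.iter (a + 1) cshift Y) k
                            = poch (INR (S k)) (a + 2) * Y (S k)).
  { intros k. rewrite iter_cderiv.
    replace (k + (a + 2))%nat with (S k + (a + 1))%nat by lia.
    rewrite iter_cshift. reflexivity. }
  apply functional_extensionality; intro t.
  rewrite (cpoly_widen _ m)
    by (try lia; intros k Hk; rewrite Hcoef, (HY (S k)) by lia; ring).
  rewrite !Laguerre_cpoly, <- !cpoly_scal, <- cpoly_plus.
  apply cpoly_ext; intros k. rewrite Hcoef. apply poch_mul_lagtype_coef_S.
Qed.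

Lemma L2a4op_LaguerreType_S (a m : nat) (N : R) (x : R) :
  L2a4op a (LaguerreType (S m) (INR a) N) x =
  - x * (inner_P a m * Laguerre m (INR (a + 3)) x + inner_Q a m N * Laguerre m (INR (a + 2)) x).
Proof.
  unfold L2a4op. rewrite Dxn_pow_mul_LaguerreType_S, Dxn_exp_Laguerre.
  replace (S 0 + (a + 2))%nat with (a + 3)%nat by lia.
  replace (0 + (a + 2))%nat with (a + 2)%nat by lia.
  assert (Hsign : (-1) ^ (a + 1) * (-1) ^ (a + 2) = -1).
  { rewrite <- pow_add. replace (a + 1 + (a + 2))%nat with (S (2 * (a + 1))) by lia.
    rewrite <- tech_pow_Rmult, pow_mult. replace ((-1) ^ 2) with 1 by ring.
    rewrite pow1. ring. }
  assert (Hexp : exp x * exp (- x) = 1) by (rewrite <- exp_plus, Rplus_opp_r; apply exp_0).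
  transitivity (((-1) ^ (a + 1) * (-1) ^ (a + 2)) * (exp x * exp (- x)) * x *
    (inner_P a m * Laguerre m (INR (a + 3)) x + inner_Q a m N * Laguerre m (INR (a + 2)) x));
    [ring | rewrite Hsign, Hexp; ring].
Qed.

Definition lagtype_eq_coef (a m : nat) (N : R) (k : nat) : R :=
  let Y := lagtype_coef a m N in
  cshift (cderiv (cderiv Y)) k + (INR a + 1) * cderiv Y k - cshift (cderiv Y) k
  + INR (S m) * Y k
  + N / INR (fact (a + 2)) *
    (poch (INR (S m)) (a + 2) * Y k
     - (inner_P a m * cshift (lag_coef m (a + 3)) k
        + inner_Q a m N * cshift (lag_coef m (a + 2)) k)).

Lemma lagtype_eq_coef_0 (a m : nat) (N : R) (k : nat) : lagtype_eq_coef a m N k = 0.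
Proof.
  unfold lagtype_eq_coef, lagtype_coef, inner_P, inner_Q, tcoef, cderiv, lag_coef.
  destruct k as [|j]; cbn [cshift]; rewrite ?poch_opp_INR_S; cbn [poch];
    rewrite Nat.sub_succ, Nat.sub_0_r;
    replace (INR a + 2) with (INR (S (S a))) by (rewrite !S_INR; ring);
    rewrite <- !S_INR, !poch_INR_S; expand_factorials;
    rewrite ?(Nat.add_comm m a), ?(Nat.add_comm j a); field_INR.
Qed.

Lemma LaguerreType_S_equation (a m : nat) (N x : R) :
  (L2op (INR a) (LaguerreType (S m) (INR a) N) x
     + INR (S m) * LaguerreType (S m) (INR a) N x)
  + N / INR (fact (a + 2)) *
    (L2a4op a (LaguerreType (S m) (INR a) N) x
     + poch (INR (S m)) (a + 2) * LaguerreType (S m) (INR a) N x) = 0.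
Proof.
  set (Y := lagtype_coef a m N).
  assert (HY : deg_le Y (S m)) by apply deg_le_lagtype_coef.
  rewrite L2a4op_LaguerreType_S, LaguerreType_S_cpoly, L2op_cpoly, !Laguerre_cpoly by exact HY.
  transitivity (cpoly (lagtype_eq_coef a m N) (S (S m)) x);
    [|apply cpoly_zero, lagtype_eq_coef_0].
  unfold lagtype_eq_coef. cbv zeta. fold Y.
  repeat rewrite ?cpoly_plus, ?cpoly_minus, ?cpoly_scal.
  rewrite !cpoly_cshift, !(cpoly_widen _ (S m) (S (S m))), !(cpoly_widen (lag_coef m _) m (S m))
    by (lia || auto using deg_le_cderiv, deg_le_lag_coef).
  ring.
Qed.

Lemma LaguerreType_0_cpoly (a : nat) (N : R) :
  LaguerreType 0 (INR a) N = cpoly (lag_coef 0 a) 0.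
Proof.
  rewrite <- Laguerre_cpoly. apply functional_extensionality; intro x.
  unfold LaguerreType, Tpoly. ring.
Qed.

Lemma L2op_deg_0 (r : R) (c : nat -> R) (x : R) : deg_le c 0 -> L2op r (cpoly c 0) x = 0.
Proof.
  intros Hc. rewrite L2op_cpoly by exact Hc. apply cpoly_zero; intros [|k];
    unfold cshift, cderiv; rewrite ?Hc by lia; ring.
Qed.

Lemma L2a4op_deg_0 (a : nat) (c : nat -> R) (x : R) : deg_le c 0 -> L2a4op a (cpoly c 0) x = 0.
Proof.
  intros Hc. unfold L2a4op.
  replace (fun s => s ^ (a + 1) * cpoly c 0 s) with (cpoly (Nat.iter (a + 1) cshift c) (a + 1 + 0))
    by (apply functional_extensionality; intro s; apply cpoly_iter_cshift).
  rewrite Dxn_cpoly_deg_lt by (apply deg_le_iter_cshift, Hc || lia).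
  replace (fun t => exp (- t) * 0) with (fun _ : R => 0)
    by (apply functional_extensionality; intro; ring).
  replace (a + 2)%nat with (S (S a)) by lia. rewrite Dxn_S_const. ring.
Qed.

Theorem theorem2p1 (alpha n : nat) (N : R) (HN : 0 < N) (x : R) (Hx : 0 <= x) :
  (L2op (INR alpha) (LaguerreType n (INR alpha) N) x
     + INR n * LaguerreType n (INR alpha) N x)
  + N / INR (fact (alpha + 2)) *
    (L2a4op alpha (LaguerreType n (INR alpha) N) x
     + poch (INR n) (alpha + 2) * LaguerreType n (INR alpha) N x) = 0.
Proof.
  (* The identity holds for every real [N] and [x]. *)
  destruct n as [|m]; [|apply LaguerreType_S_equation].
  replace (alpha + 2)%nat with (S (alpha + 1)) by lia.
  rewrite LaguerreType_0_cpoly, L2op_deg_0, L2a4op_deg_0, poch_S_l by apply deg_le_lag_coef.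
  simpl. ring.
Qed.
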